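(* Let $(X,\|\cdot\|)$ be an extended normed linear space and let $\tau_F$ be the finest locally convex topology of $X$. Then $(X,\tau_F)$ is metrizable if and only if $X/X_{fin}$ is finite dimensional, where $X_{fin}=\{x\in X:\|x\|<\infty\}$.
   Context: An extended norm on a vector space $X$ over $\mathbb{R}$ or $\mathbb{C}$ is a map $\|\cdot\|:X\to[0,\infty]$ with $\|x\|=0$ iff $x=0_X$, $\|\alpha x\|=|\alpha|\|x\|$, and $\|x+y\|\le\|x\|+\|y\|$; $X$ carries the topology with basic neighborhoods $\{y:\|y-x\|<\varepsilon\}$. A locally convex topology on $X$ is one induced by a family of finite-valued seminorms. The finest locally convex topology of $X$ is the locally convex topology $\tau_F$ coarser than the extended norm topology such that every locally convex topology coarser than the extended norm topology is coarser than $\tau_F$. *)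

From HB Require Import structures.
From mathcomp Require Import all_boot all_order all_algebra.
From mathcomp Require Import complex.
From mathcomp Require Import boolp classical_sets reals constructive_ereal.
Set Implicit Arguments. Unset Strict Implicit. Unset Printing Implicit Defensive.
Import Order.TTheory GRing.Theory Num.Theory.
Local Open Scope classical_set_scope.
Local Open Scope ring_scope.

(* Scalars: a field K (R or C = R[i]) with absolute value absK : K -> R.   *)
(* Topologies on a fixed carrier X are represented by their families of   *)
(* open sets (set (set X)), since X carries several topologies at once.    *)

Section Defs.
Variables (R : realType) (K : numFieldType) (absK : K -> R) (X : lmodType K).

Definition is_extended_norm (N : X -> \bar R) : Prop :=
  [/\ forall x, (0 <= N x)%E,
      forall x, N x = 0%E <-> x = 0,
      forall (a : K) x, N (a *: x) = ((absK a)%:E * N x)%E &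
      forall x y, (N (x + y)%R <= N x + N y)%E].

Definition enorm_topology (N : X -> \bar R) : set (set X) :=
  [set U | forall x, U x ->
     exists2 e : R, 0 < e & [set y | (N (y - x)%R < e%:E)%E] `<=` U].

Definition is_seminorm (p : X -> R) : Prop :=
  [/\ forall x, 0 <= p x,
      forall (a : K) x, p (a *: x) = absK a * p x &
      forall x y, p (x + y) <= p x + p y].

Definition seminorm_topology (P : set (X -> R)) : set (set X) :=
  [set U | forall x, U x ->
     exists (s : seq (X -> R)) (e : R),
       [/\ forall p, p \in s -> P p, 0 < e &
           [set y | forall p, p \in s -> p (y - x) < e] `<=` U]].

Definition locally_convex_topology (T : set (set X)) : Prop :=
  exists P : set (X -> R), (forall p, P p -> is_seminorm p) /\
                           T = seminorm_topology P.

Definition coarser (T1 T2 : set (set X)) : Prop := T1 `<=` T2.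

Definition finest_locally_convex_topology (N : X -> \bar R)
    (tauF : set (set X)) : Prop :=
  [/\ locally_convex_topology tauF,
      coarser tauF (enorm_topology N) &
      forall T, locally_convex_topology T -> coarser T (enorm_topology N) ->
        coarser T tauF].

Definition is_metric (d : X -> X -> R) : Prop :=
  [/\ forall x y, 0 <= d x y,
      forall x y, d x y = 0 <-> x = y,
      forall x y, d x y = d y x &
      forall x y z, d x z <= d x y + d y z].

Definition metric_topology (d : X -> X -> R) : set (set X) :=
  [set U | forall x, U x ->
     exists2 e : R, 0 < e & [set y | d x y < e] `<=` U].

Definition metrizable (T : set (set X)) : Prop :=
  exists d, is_metric d /\ T = metric_topology d.

Definition Xfin (N : X -> \bar R) : set X := [set x | (N x < +oo)%E].

(* X / X_fin is finite dimensional: finitely many cosets span X / X_fin *)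
Definition finite_dim_quotient (N : X -> \bar R) : Prop :=
  exists (n : nat) (v : 'I_n -> X),
    forall x : X, exists c : 'I_n -> K,
      Xfin N (x - \sum_(i < n) c i *: v i).

Definition corollary5p11_statement : Prop :=
  forall (N : X -> \bar R) (tauF : set (set X)),
    is_extended_norm N ->
    finest_locally_convex_topology N tauF ->
    (metrizable tauF <-> finite_dim_quotient N).

End Defs.

Definition absC (R : realType) (z : R[i]) : R := complex.Re `|z|.

(* If e_1, ..., e_m span X and are free modulo X_fin, their coordinate forms
   c_i vanish on X_fin and
     q x = ||x - sum_i c_i(x) e_i|| + sum_i |c_i(x)|
   is a norm that coincides with ||.|| on X_fin.  Being dominated by ||.||, it
   defines a locally convex topology below tau_F; and every tau_F-continuous
   seminorm is bounded by a multiple of q.  Hence tau_F is the q-norm topology.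

   Conversely, a metrizable tau_F has a countable base {sigma_k < 1} of
   seminorm balls at 0.  If X / X_fin were infinite-dimensional, there would be
   nonzero linear forms psi_k vanishing on X_fin such that each x is killed by
   all but finitely many of them; r = sum_k w_k |psi_k| is then a seminorm
   vanishing on X_fin, so {r < 1} is a tau_F-neighbourhood of 0, while the
   weights w_k can be chosen so that {r < 1} contains no sigma_k-ball. *)

From mathcomp Require Import all_boot all_order all_algebra.
From mathcomp Require Import complex.
From mathcomp Require Import boolp classical_sets reals constructive_ereal.
Set Implicit Arguments. Unset Strict Implicit. Unset Printing Implicit Defensive.
Import Order.TTheory GRing.Theory Num.Theory.
Local Open Scope classical_set_scope.
Local Open Scope ring_scope.

Section Subspaces.
Variables (K : fieldType) (X : lmodType K).
Implicit Types (G : set X) (a : K) (x y : X).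

Definition subspace G :=
  [/\ G 0, forall x y, G x -> G y -> G (x + y) & forall a x, G x -> G (a *: x)].

Definition linear_form (phi : X -> K) :=
  (forall x y, phi (x + y) = phi x + phi y) /\ (forall a x, phi (a *: x) = a * phi x).

Section SubspaceTheory.
Variables (G : set X) (sG : subspace G).

Lemma subspace0 : G 0. Proof. by case: sG. Qed.
Lemma subspaceD x y : G x -> G y -> G (x + y). Proof. by case: sG => _ + _; apply. Qed.
Lemma subspaceZ a x : G x -> G (a *: x). Proof. by case: sG => _ _; apply. Qed.
Lemma subspaceN x : G x -> G (- x). Proof. by rewrite -scaleN1r; apply: subspaceZ. Qed.
Lemma subspaceB x y : G x -> G y -> G (x - y).
Proof. by move=> Gx Gy; apply/subspaceD/subspaceN. Qed.

End SubspaceTheory.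

Lemma linear_form0 phi : linear_form phi -> phi 0 = 0.
Proof. by case=> _ phiZ; rewrite -(scale0r 0) phiZ mul0r. Qed.

Lemma linear_form_sum phi I (r : seq I) (c : I -> K) (v : I -> X) :
  linear_form phi -> phi (\sum_(i <- r) c i *: v i) = \sum_(i <- r) c i * phi (v i).
Proof.
move=> lphi; have [phiD phiZ] := lphi.
by rewrite (big_morph phi phiD (linear_form0 lphi)); apply: eq_bigr => i _; rewrite phiZ.
Qed.

Lemma subspace_complement G : subspace G -> exists C,
  [/\ subspace C, forall x, G x -> C x -> x = 0 & forall x, exists c, C c /\ G (x - c)].
Proof.
move=> sG.
(* [Q] does not require [A 0], so that [set0], the union of the empty chain, is in [Q]. *)
pose Q := [set A : set X | [/\ forall x y, A x -> A y -> A (x + y),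
  forall a x, A x -> A (a *: x) & forall x, A x -> G x -> x = 0]].
have [A [[AD AZ AG] Amax]] : exists A, Q A /\ forall B, A `<` B -> ~ Q B.
  apply: Zorn_bigcup => F FQ Ftot; split.
  - move=> x y [A1 FA1 xA1] [A2 FA2 yA2].
    have [A12|A21] := Ftot _ _ FA1 FA2.
    + by exists A2 => //; have [+ _ _] := FQ _ FA2; apply; first exact: A12.
    + by exists A1 => //; have [+ _ _] := FQ _ FA1; apply; last exact: A21.
  - by move=> a x [A1 FA1 xA1]; exists A1 => //; have [_ + _] := FQ _ FA1; apply.
  - by move=> x [A1 FA1 xA1]; have [_ _] := FQ _ FA1; apply.
have A0 : A 0.
  apply: contrapT => nA0; apply: (Amax (A `|` [set 0])).
    by split=> [x Ax|BA]; [left | apply/nA0/BA; right].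
  split.
  - by move=> x y [Ax|->] [Ay|->]; rewrite ?addr0 ?add0r; [left; apply: AD|left|left|right].
  - by move=> a x [Ax|->]; [left; apply: AZ | right; rewrite scaler0].
  - by move=> x [Ax|->] // /(AG _ Ax).
exists A; split=> [|x Gx Ax|x]; [by split | exact: AG |].
apply: contrapT => nx.
have {}nx c : A c -> ~ G (x - c) by move=> Ac Gc; apply: nx; exists c.
pose B := [set y | exists c a, A c /\ y = c + a *: x].
apply: (Amax B).
  split=> [y Ay|BA]; first by exists y, 0; rewrite scale0r addr0.
  have Ax : A x by apply: BA; exists 0, 1; rewrite add0r scale1r.
  by apply: (nx x) => //; rewrite subrr; apply: (subspace0 sG).
split.
- move=> _ _ [c1 [a1 [Ac1 ->]]] [c2 [a2 [Ac2 ->]]].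
  by exists (c1 + c2), (a1 + a2); rewrite scalerDl addrACA; split; first exact: AD.
- move=> b _ [c [a [Ac ->]]]; exists (b *: c), (b * a).
  by rewrite scalerDr scalerA; split; first exact: AZ.
- move=> _ [c [a [Ac ->]]]; have [->|a0] := eqVneq a 0 => Gy.
    by rewrite scale0r addr0 in Gy *; apply: AG.
  exfalso; apply: (nx (- a^-1 *: c)); first exact: AZ.
  have -> : x - - a^-1 *: c = a^-1 *: (c + a *: x).
    by rewrite scaleNr opprK scalerDr scalerA mulVf // scale1r addrC.
  exact: (subspaceZ sG _ Gy).
Qed.

Lemma subspace_projection G : subspace G -> exists pi : X -> X,
  [/\ forall x y, pi (x + y) = pi x + pi y, forall a x, pi (a *: x) = a *: pi x,
      forall x, G (pi x) & forall x, G x -> pi x = x].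
Proof.
move=> sG; have [C [sC CG CGx]] := subspace_complement sG.
have [c cP] := choice CGx.
have c_unique x c1 c2 : C c1 -> C c2 -> G (x - c1) -> G (x - c2) -> c1 = c2.
  move=> Cc1 Cc2 Gc1 Gc2; apply/eqP; rewrite -subr_eq0; apply/eqP/CG.
    have -> : c1 - c2 = (x - c2) - (x - c1) by rewrite opprB [RHS]addrC addrA subrK.
    exact: (subspaceB sG Gc2 Gc1).
  exact: (subspaceB sC Cc1 Cc2).
exists (fun x => x - c x); split=> [x y|a x|x|x Gx].
- suff -> : c (x + y) = c x + c y by rewrite opprD addrACA.
  apply: (c_unique (x + y)); [exact: (cP _).1 | apply: (subspaceD sC); apply: (cP _).1 |
    exact: (cP _).2 | rewrite opprD addrACA; apply: (subspaceD sG); apply: (cP _).2].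
- suff -> : c (a *: x) = a *: c x by rewrite scalerBr.
  apply: (c_unique (a *: x)); [exact: (cP _).1 | apply: (subspaceZ sC); apply: (cP _).1 |
    exact: (cP _).2 | rewrite -scalerBr; apply: (subspaceZ sG); apply: (cP _).2].
- exact: (cP _).2.
- suff -> : c x = 0 by rewrite subr0.
  apply: (c_unique x); [exact: (cP _).1 | exact: (subspace0 sC) | exact: (cP _).2 |].
  by rewrite subr0.
Qed.

Lemma hyperplane_form G u : subspace G -> ~ G u -> exists phi,
  [/\ linear_form phi, forall x, G x -> phi x = 0 & phi u = 1].
Proof.
move=> sG nGu.
pose Gu := [set y | exists a, G (y - a *: u)].
have sGu : subspace Gu.
  split=> [|x y [a Ga] [b Gb]|b x [a Ga]].
  - by exists 0; rewrite scale0r subr0; apply: (subspace0 sG).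
  - by exists (a + b); rewrite scalerDl opprD addrACA; apply: (subspaceD sG).
  - by exists (b * a); rewrite -scalerA -scalerBr; apply: (subspaceZ sG).
have coef_unique y a b : G (y - a *: u) -> G (y - b *: u) -> a = b.
  move=> Ga Gb; apply: contrapT => /eqP; rewrite -subr_eq0 => ab; apply: nGu.
  have Gabu : G ((a - b) *: u).
    have -> : (a - b) *: u = (y - b *: u) - (y - a *: u).
      by rewrite opprB [RHS]addrC addrA subrK scalerBl.
    exact: (subspaceB sG Gb Ga).
  by have := subspaceZ sG (a - b)^-1 Gabu; rewrite scalerK.
have [pi [piD piZ piGu pid]] := subspace_projection sGu.
have [phi phiP] := choice piGu.
exists phi; split; first split.
- move=> x y; apply: (coef_unique (pi (x + y))) => //.
  by rewrite piD scalerDl opprD addrACA; apply: (subspaceD sG).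
- move=> a x; apply: (coef_unique (pi (a *: x))) => //.
  by rewrite piZ -scalerA -scalerBr; apply: (subspaceZ sG).
- move=> x Gx; apply: (coef_unique (pi x)) => //.
  by rewrite scale0r subr0 pid //; exists 0; rewrite scale0r subr0.
- apply: (coef_unique (pi u)) => //.
  rewrite scale1r pid ?subrr; first exact: (subspace0 sG).
  by exists 1; rewrite scale1r subrr; apply: (subspace0 sG).
Qed.

Definition span_mod G n (v : 'I_n -> X) :=
  [set x | exists c : 'I_n -> K, G (x - \sum_i c i *: v i)].

Definition spans_mod G n (v : 'I_n -> X) := forall x, span_mod G v x.

Definition free_mod G n (v : 'I_n -> X) :=
  forall c : 'I_n -> K, G (\sum_i c i *: v i) -> forall i, c i = 0.

Lemma subspace_span_mod G n (v : 'I_n -> X) : subspace G -> subspace (span_mod G v).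
Proof.
move=> sG; split=> [|x y [c Gc] [d Gd]|a x [c Gc]].
- exists (fun=> 0); rewrite big1 ?subr0 => [|i _]; last exact: scale0r.
  exact: (subspace0 sG).
- exists (fun i => c i + d i); rewrite (eq_bigr _ (fun i _ => scalerDl _ _ _)) big_split /=.
  by rewrite opprD addrACA; apply: (subspaceD sG).
- exists (fun i => a * c i); rewrite (eq_bigr _ (fun i _ => esym (scalerA _ _ _))) /=.
  by rewrite -scaler_sumr -scalerBr; apply: (subspaceZ sG).
Qed.

Lemma sub_span_mod G n (v : 'I_n -> X) : subspace G -> G `<=` span_mod G v.
Proof.
by move=> sG x Gx; exists (fun=> 0); rewrite big1 ?subr0 // => i _; rewrite scale0r.
Qed.

Lemma span_mod_vec G n (v : 'I_n -> X) i : subspace G -> span_mod G v (v i).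
Proof.
move=> sG; exists (fun j => (j == i)%:R); rewrite (bigD1 i) //= eqxx scale1r.
rewrite big1 ?addr0 ?subrr => [|j /negbTE ->]; [exact: (subspace0 sG) | exact: scale0r].
Qed.

Lemma exists_basis_mod G n (v : 'I_n -> X) : subspace G -> spans_mod G v ->
  exists m (w : 'I_m -> X), spans_mod G w /\ free_mod G w.
Proof.
move=> sG; elim/ltn_ind: n v => -[|n] IH v spv.
  by exists 0, v; split=> // c _ [].
have [freev|] := pselect (free_mod G v); first by exists n.+1, v.
move=> /existsNP [c /not_implyP [Gc /existsNP [j /eqP cj0]]].
apply: (IH n (ltnSn n) (fun k => v (lift j k))) => x.
have [d Gd] := spv x; pose t := d j / c j.
exists (fun k => d (lift j k) - t * c (lift j k)).
have -> : \sum_k (d (lift j k) - t * c (lift j k)) *: v (lift j k)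
    = \sum_i (d i - t * c i) *: v i.
  by rewrite [RHS](bigD1_ord j) //= mulfVK // subrr scale0r add0r.
rewrite (eq_bigr _ (fun i _ => scalerBl _ _ _)) sumrB /=.
rewrite (eq_bigr _ (fun i _ => esym (scalerA _ _ _))) -scaler_sumr /=.
by rewrite opprB addrA addrAC; apply: (subspaceD sG) => //; apply: (subspaceZ sG).
Qed.

Lemma coordinate_forms G m (v : 'I_m -> X) : subspace G ->
  spans_mod G v -> free_mod G v -> exists c : 'I_m -> X -> K,
  [/\ forall i, linear_form (c i), forall i x, G x -> c i x = 0 &
      forall x, G (x - \sum_i c i x *: v i)].
Proof.
move=> sG spv frv.
(* [span_mod G (v_ i)] is [G] plus the span of the [v j], [j != i]; it misses [v i]. *)
pose v_ i j := if j == i then 0 else v j.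
have v_notin i : ~ span_mod G (v_ i) (v i).
  move=> [d Gd]; pose e j := (j == i)%:R - (if j == i then 0 else d j).
  suff : e i = 0 by rewrite /e eqxx subr0 => /eqP; rewrite oner_eq0.
  apply: frv; rewrite (eq_bigr _ (fun j _ => scalerBl _ _ _)) sumrB /=.
  rewrite (bigD1 i) //= eqxx scale1r big1 => [|j /negbTE ->]; last by rewrite scale0r.
  rewrite addr0; congr (G (_ - _)): Gd; apply: eq_bigr => j _.
  by rewrite /v_; case: eqP => _; rewrite ?scale0r ?scaler0.
have [c cP] := choice (fun i => hyperplane_form (subspace_span_mod (v_ i) sG) (v_notin i)).
have c_lin i : linear_form (c i) by case: (cP i).
have c_van i x : span_mod G (v_ i) x -> c i x = 0 by case: (cP i) => _ + _; apply.
have cv i j : c i (v j) = (i == j)%:R.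
  have [<-|ij] := eqVneq i j; first by case: (cP i).
  apply: c_van; exists (fun k => (k == j)%:R); rewrite (bigD1 j) //= eqxx.
  rewrite /v_ eq_sym (negbTE ij) scale1r big1 ?addr0 ?subrr => [|k /negbTE ->].
    exact: (subspace0 sG).
  by rewrite scale0r.
have cG i x : G x -> c i x = 0 by move=> Gx; apply/c_van/sub_span_mod.
exists c; split=> // x.
have [d Gd] := spv x; rewrite (eq_bigr (fun i => d i *: v i)) // => i _.
congr (_ *: _); have [cD _] := c_lin i.
rewrite -(congr1 (c i) (subrK (\sum_j d j *: v j) x)) cD cG // add0r.
rewrite linear_form_sum // (bigD1 i) //= cv eqxx mulr1 big1 ?addr0 // => j /negbTE ji.
by rewrite cv eq_sym ji mulr0.
Qed.

Lemma span_mod_widen G (u : nat -> X) m k : (m <= k)%N ->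
  span_mod G (fun i : 'I_m => u i) `<=` span_mod G (fun i : 'I_k => u i).
Proof.
move=> mk x [c Gc]; pose c' j := if @insub _ _ 'I_m j is Some i then c i else 0.
exists (fun i : 'I_k => c' i); congr (G (_ - _)): Gc.
rewrite (eq_bigr (fun i : 'I_m => c' i *: u i)) => [|i _]; last by rewrite /c' valK.
rewrite (big_ord_widen k (fun j => c' j *: u j) mk) big_mkcond /=.
by apply: eq_bigr => i _; case: ltnP => // im; rewrite /c' insubF ?scale0r // ltnNge im.
Qed.

Lemma free_sequence G : (forall n (v : 'I_n -> X), ~ spans_mod G v) ->
  exists u : nat -> X, forall k, ~ span_mod G (fun i : 'I_k => u i) (u k).
Proof.
move=> nspan.
have /choice [nxt nxtP] (s : seq X) :
    exists x, ~ span_mod G (fun i : 'I_(size s) => s`_i) x.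
  by apply/existsNP => spans; apply: (nspan _ _ spans).
pose s k := iter k (fun s => rcons s (nxt s)) [::].
have size_s k : size (s k) = k by elim: k => //= k IH; rewrite size_rcons IH.
have nth_s k i : (i < k)%N -> (s k)`_i = nxt (s i).
  elim: k => // k IH; rewrite ltnS leq_eqVlt /= nth_rcons size_s.
  by case/orP => [/eqP ->|ik]; rewrite ?ltnn ?eqxx // ik IH.
exists (fun k => nxt (s k)) => k; have := nxtP (s k); rewrite size_s.
by apply: contra_not => -[c Gc]; exists c; under eq_bigr do rewrite nth_s //.
Qed.

Lemma exhausting_chain G : subspace G -> (forall n (v : 'I_n -> X), ~ spans_mod G v) ->
  exists H : nat -> set X, [/\ forall k, subspace (H k), forall k, G `<=` H k,
    forall k, exists u, ~ H k u & forall x, exists n, forall k, (n <= k)%N -> H k x].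
Proof.
move=> sG nspan; have [u uP] := free_sequence nspan.
pose F k := span_mod G (fun i : 'I_k => u i).
have sF k : subspace (F k) by apply: subspace_span_mod.
have [pi [piD piZ piF pid]] : exists pi : X -> X,
    [/\ forall x y, pi (x + y) = pi x + pi y, forall a x, pi (a *: x) = a *: pi x,
        forall x, exists n, F n (pi x) & forall x, (exists n, F n x) -> pi x = x].
  apply: subspace_projection; split=> [|x y [m Fx] [n Fy]|a x [n Fx]].
  - by exists 0%N; apply: (subspace0 (sF 0%N)).
  - exists (maxn m n); apply: (subspaceD (sF _)).
      exact: span_mod_widen (leq_maxl m n) _ Fx.
    exact: span_mod_widen (leq_maxr m n) _ Fy.
  - by exists n; apply: (subspaceZ (sF n)).
exists (fun k => pi @^-1` F k); split=> [k|k x Gx|k|x] /=.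
- split=> [|x y|a x] /=; rewrite ?piD ?piZ.
  + by rewrite -(scale0r 0) piZ scale0r; apply: (subspace0 (sF k)).
  + exact: (subspaceD (sF k)).
  + exact: (subspaceZ (sF k)).
- have F0x : F 0%N x by apply: sub_span_mod.
  by rewrite pid; [apply: span_mod_widen F0x | exists 0%N].
- exists (u k); rewrite pid; first exact: uP.
  by exists k.+1; apply: (span_mod_vec (fun i : 'I_k.+1 => u i) ord_max sG).
- by have [n Fx] := piF x; exists n => k nk; apply: span_mod_widen nk _ Fx.
Qed.

Lemma dual_sequence G : subspace G -> (forall n (v : 'I_n -> X), ~ spans_mod G v) ->
  exists psi : nat -> X -> K, [/\ forall k, linear_form (psi k),
    forall k x, G x -> psi k x = 0, forall k, exists u, psi k u = 1 &
    forall x, exists n, forall k, (n <= k)%N -> psi k x = 0].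
Proof.
move=> sG nspan; have [H [sH GH /choice [u uH] Hx]] := exhausting_chain sG nspan.
have /choice [psi psiP] k := hyperplane_form (sH k) (uH k).
exists psi; split=> [k|k x Gx|k|x]; first by case: (psiP k).
- by case: (psiP k) => _ + _; apply; apply: GH.
- by exists (u k); case: (psiP k).
- by have [n Hn] := Hx x; exists n => k /Hn; case: (psiP k) => _ + _; apply.
Qed.

End Subspaces.

Section ExtendedNormedSpaces.
Variables (R : realType) (K : numFieldType) (absK : K -> R) (X : lmodType K).
Hypotheses (absK_ge0 : forall a, 0 <= absK a)
  (absK_eq0 : forall a, absK a = 0 -> a = 0)
  (absKM : forall a b, absK (a * b) = absK a * absK b)
  (absKD : forall a b, absK (a + b) <= absK a + absK b)
  (absK_onto : forall t, 0 <= t -> exists a, absK a = t).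
Implicit Types (x y z : X) (a : K) (p q : X -> R).

Lemma absK0 : absK 0 = 0.
Proof. by have [a a0] := absK_onto (lexx 0); rewrite -(absK_eq0 a0). Qed.

Lemma absK1 : absK 1 = 1.
Proof.
have absK1_neq0 : absK 1 != 0 by apply/eqP => /absK_eq0/eqP; rewrite oner_eq0.
by apply: (mulfI absK1_neq0); rewrite -absKM !mulr1.
Qed.

Lemma absKN a : absK (- a) = absK a.
Proof.
have /eqP : absK (-1) ^+ 2 = 1 by rewrite expr2 -absKM mulrNN mulr1 absK1.
rewrite sqrf_eq1 => /orP[/eqP absKN1|/eqP absKN1]; last first.
  by have := absK_ge0 (-1); rewrite absKN1 ler0N1.
by rewrite -mulN1r absKM absKN1 mul1r.
Qed.

Section Seminorm.
Variables (p : X -> R) (hp : is_seminorm absK p).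

Lemma seminorm_ge0 x : 0 <= p x. Proof. by case: hp. Qed.
Lemma seminormZ a x : p (a *: x) = absK a * p x. Proof. by case: hp. Qed.
Lemma seminormD x y : p (x + y) <= p x + p y. Proof. by case: hp. Qed.
Lemma seminorm0 : p 0 = 0. Proof. by rewrite -(scale0r 0) seminormZ absK0 mul0r. Qed.
Lemma seminormN x : p (- x) = p x.
Proof. by rewrite -scaleN1r seminormZ absKN absK1 mul1r. Qed.

Lemma seminorm_sum n (c : 'I_n -> K) (v : 'I_n -> X) :
  p (\sum_i c i *: v i) <= \sum_i absK (c i) * p (v i).
Proof.
apply: (big_ind2 (fun y b => p y <= b)); first by rewrite seminorm0.
  by move=> ? ? ? ? ? ?; apply: le_trans (seminormD _ _) (lerD _ _).
by move=> i _; rewrite seminormZ.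
Qed.

Lemma seminormZl w : 0 <= w -> is_seminorm absK (fun x => w * p x).
Proof.
move=> w0; split=> [x|a x|x y]; first exact: mulr_ge0 (seminorm_ge0 x).
  by rewrite seminormZ mulrCA.
by rewrite -mulrDr ler_wpM2l // seminormD.
Qed.

End Seminorm.

Lemma seminorm_big (I : eqType) (r : seq I) (P : I -> X -> R) :
  (forall i, i \in r -> is_seminorm absK (P i)) ->
  is_seminorm absK (fun x => \sum_(i <- r) P i x).
Proof.
move=> hP; split=> [x|a x|x y]; rewrite !big_seq.
- by apply: sumr_ge0 => i /hP /seminorm_ge0.
- by rewrite mulr_sumr; apply: eq_bigr => i /hP /seminormZ.
- by rewrite -big_split; apply: ler_sum => i /hP /seminormD.
Qed.

Lemma seminorm_form (phi : X -> K) : linear_form phi ->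
  is_seminorm absK (fun x => absK (phi x)).
Proof. by case=> phiD phiZ; split=> [x|a x|x y]; rewrite ?phiD ?phiZ ?absKM. Qed.

Lemma seminorm_metric q : is_seminorm absK q -> (forall x, q x = 0 -> x = 0) ->
  is_metric (fun x y => q (y - x)).
Proof.
move=> hq q_eq0; split=> [x y|x y|x y|x y z].
- exact: seminorm_ge0.
- by split=> [/q_eq0/eqP|->]; [rewrite subr_eq0 => /eqP | rewrite subrr seminorm0].
- by rewrite -opprB seminormN.
- have -> : z - x = (z - y) + (y - x) by rewrite addrA subrK.
  by rewrite [leRHS]addrC seminormD.
Qed.

Lemma metric_ball_open (d : X -> X -> R) x e : is_metric d ->
  metric_topology d [set y | d x y < e].
Proof.
case=> _ _ _ tri y /= xy; exists (e - d x y) => [|z /= yz]; first by rewrite subr_gt0.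
by apply: le_lt_trans (tri x y z) _; rewrite -ltrBrDl.
Qed.

Lemma metric_topology_seminorm q : is_seminorm absK q ->
  metric_topology (fun x y => q (y - x)) = seminorm_topology [set q].
Proof.
move=> hq; apply/seteqP; split=> U hU x /(hU x).
- case=> e e0 eU; exists [:: q], e; split=> // [p|y qy]; first by rewrite inE => /eqP.
  exact/eU/qy/mem_head.
- by case=> s [e [sq e0 sU]]; exists e => // y qy; apply: sU => p /sq ->.
Qed.

Lemma seminorm_unit_ball_open P p : is_seminorm absK p -> P p ->
  seminorm_topology P [set y | p y < 1].
Proof.
move=> hp Pp x /= px; exists [:: p], (1 - p x); split=> [q||y].
- by rewrite inE => /eqP ->.
- by rewrite subr_gt0.
move=> /(_ p (mem_head _ _)) pyx; rewrite /= -(subrK x y).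
by apply: le_lt_trans (seminormD hp _ _) _; rewrite -ltrBrDr.
Qed.

Lemma seminorm_topology_bounded P q : is_seminorm absK q ->
  (forall p, P p -> exists2 C, 0 < C & forall z, p z <= C * q z) ->
  coarser (seminorm_topology P) (seminorm_topology [set q]).
Proof.
move=> hq Pq U hU x /(hU x) [s [e [sP e0 sU]]].
have [C C0 sC] : exists2 C, 0 < C & forall p, p \in s -> forall z, p z <= C * q z.
  elim: s {sU} sP => [|p s IH] sP; first by exists 1.
  have [Cp Cp0 pC] := Pq p (sP p (mem_head _ _)).
  have [Cs Cs0 sC] : exists2 C, 0 < C & forall p, p \in s -> forall z, p z <= C * q z.
    by apply: IH => p' p's; apply: sP; rewrite inE p's orbT.
  exists (Cp + Cs) => [|p']; first exact: addr_gt0.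
  rewrite inE => /orP[/eqP -> | p's] z.
    by apply: le_trans (pC z) _; rewrite ler_wpM2r ?(seminorm_ge0 hq) ?lerDl ?ltW.
  by apply: le_trans (sC p' p's z) _; rewrite ler_wpM2r ?(seminorm_ge0 hq) ?lerDr ?ltW.
exists [:: q], (e / C); split=> [p||y qy]; first by rewrite inE => /eqP.
  by rewrite divr_gt0.
apply: sU => p ps; apply: le_lt_trans (sC p ps _) _.
by rewrite mulrC -ltr_pdivlMr // qy ?mem_head.
Qed.

Lemma seminorm_locally_finite_sum (p : nat -> X -> R) :
  (forall k, is_seminorm absK (p k)) ->
  (forall x, exists n, forall k, (n <= k)%N -> p k x = 0) ->
  exists r, [/\ is_seminorm absK r, forall k x, p k x <= r x &
                forall x, (forall k, p k x = 0) -> r x = 0].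
Proof.
move=> hp /choice [n pn].
have r_eq x m : (n x <= m)%N -> \sum_(k < n x) p k x = \sum_(k < m) p k x.
  move=> nm; rewrite (big_ord_widen m (fun k => p k x) nm) big_mkcond /=.
  by apply: eq_bigr => k _; case: ltnP => // /pn ->.
pose r x := \sum_(k < n x) p k x.
exists r; split=> [|k x|x px0]; last by rewrite /r big1.
- split=> [x|a x|x y].
  + by apply: sumr_ge0 => k _; apply: seminorm_ge0.
  + rewrite /r (r_eq _ _ (leq_maxl _ (n x))) (r_eq x _ (leq_maxr (n (a *: x)) _)).
    by rewrite mulr_sumr; apply: eq_bigr => k _; apply: seminormZ.
  + pose m := maxn (n (x + y)) (maxn (n x) (n y)).
    rewrite /r (r_eq _ m (leq_maxl _ _)).
    rewrite (r_eq x m (leq_trans (leq_maxl _ _) (leq_maxr _ _))).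
    rewrite (r_eq y m (leq_trans (leq_maxr _ _) (leq_maxr _ _))).
    by rewrite -big_split; apply: ler_sum => k _; apply: seminormD.
- have km : (k < maxn (n x) k.+1)%N by rewrite leq_max ltnSn orbT.
  rewrite /r (r_eq x _ (leq_maxl _ k.+1)) (bigD1 (Ordinal km)) //= lerDl.
  by apply: sumr_ge0 => j _; apply: seminorm_ge0.
Qed.

Lemma metrizable_countable_base P (d : X -> X -> R) :
  (forall p, P p -> is_seminorm absK p) ->
  is_metric d -> metric_topology d = seminorm_topology P ->
  exists sigma : nat -> X -> R, (forall k, is_seminorm absK (sigma k)) /\
    forall U, seminorm_topology P U -> U 0 -> exists k, [set y | sigma k y < 1] `<=` U.
Proof.
move=> hP hd dP; have [_ d_eq0 _ _] := hd.
have hB k : exists se : seq (X -> R) * R,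
    [/\ forall p, p \in se.1 -> P p, 0 < se.2 &
        [set y | forall p, p \in se.1 -> p y < se.2] `<=` [set y | d 0 y < k.+1%:R^-1]].
  have : seminorm_topology P [set y | d 0 y < k.+1%:R^-1].
    by rewrite -dP; apply: metric_ball_open.
  case/(_ 0) => [|s [e [sP e0 sB]]]; first by rewrite /= (proj2 (d_eq0 0 0)) ?invr_gt0.
  by exists (s, e); split=> // y sy; apply: sB => p /sy; rewrite subr0.
have [se seP] := choice hB.
exists (fun k y => (se k).2^-1 * \sum_(p <- (se k).1) p y); split=> [k|U].
  have [sP e0 _] := seP k; apply: seminormZl; last by rewrite invr_ge0 ltW.
  by apply: seminorm_big => p /sP /hP.
rewrite -dP => /(_ 0) hU /hU [eps eps0 epsU].
have [k kB] : exists k, k.+1%:R^-1 < eps.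
  exists (Num.bound eps^-1); rewrite invf_plt ?posrE ?ltr0n //.
  by apply: lt_le_trans (archi_boundP _) _; rewrite ?invr_ge0 ?(ltW eps0) ?ler_nat.
exists k => y /= sy; apply/epsU/(lt_trans _ kB); have [sP e0 sB] := seP k.
apply: sB => p ps; apply: le_lt_trans (_ : p y <= \sum_(p <- (se k).1) p y) _.
  rewrite (big_rem p ps) lerDl big_seq; apply: sumr_ge0 => p' /mem_rem p's.
  exact/seminorm_ge0/hP/sP.
by move: sy; rewrite ltr_pdivrMl // mulr1.
Qed.

Definition dominated_by (N : X -> \bar R) p := forall x, ((p x)%:E <= N x)%E.

Section ExtendedNorm.
Variables (N : X -> \bar R) (hN : is_extended_norm absK N).

Lemma enorm_ge0 x : (0 <= N x)%E. Proof. by case: hN. Qed.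
Lemma enorm_eq0 x : N x = 0%E <-> x = 0. Proof. by case: hN. Qed.
Lemma enormZ a x : N (a *: x) = ((absK a)%:E * N x)%E. Proof. by case: hN. Qed.
Lemma enormD x y : (N (x + y) <= N x + N y)%E. Proof. by case: hN. Qed.

Lemma XfinE x : Xfin N x -> N x = (fine (N x))%:E.
Proof. by move=> fx; rewrite fineK // ge0_fin_numE ?enorm_ge0. Qed.

Lemma subspace_Xfin : subspace (Xfin N).
Proof.
split=> [|x y fx fy|a x fx]; rewrite /Xfin /=.
- by rewrite (proj2 (enorm_eq0 0)) ?ltry.
- by apply: le_lt_trans (enormD x y) _; apply: lte_add_pinfty.
- by rewrite enormZ (XfinE fx) -EFinM ltry.
Qed.

Lemma fine_enormD x y : Xfin N x -> Xfin N y ->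
  fine (N (x + y)) <= fine (N x) + fine (N y).
Proof.
move=> fx fy; rewrite -lee_fin EFinD -!XfinE //; first exact: enormD.
exact: (subspaceD subspace_Xfin fx fy).
Qed.

Lemma fine_enormZ a x : Xfin N x -> fine (N (a *: x)) = absK a * fine (N x).
Proof. by move=> fx; rewrite enormZ (XfinE fx) -EFinM. Qed.

Lemma seminorm_topology_coarser P : (forall p, P p -> dominated_by N p) ->
  coarser (seminorm_topology P) (enorm_topology N).
Proof.
move=> PN U hU x /(hU x) [s [e [sP e0 sU]]]; exists e => // y Nyx.
by apply: sU => p /sP /PN /(_ (y - x)) pN; rewrite -lte_fin; apply: le_lt_trans pN Nyx.
Qed.

Lemma dominated_of_unit_ball p d : is_seminorm absK p -> 0 < d ->
  (forall z, (N z < d%:E)%E -> p z < 1) -> dominated_by N (fun z => d * p z).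
Proof.
move=> hp d0 ball z; have [fz|] := ltP (N z) +oo%E; last first.
  by rewrite leye_eq => /eqP ->; apply: leey.
have := seminorm_ge0 hp z; rewrite le_eqVlt => /orP[/eqP <-|pz_gt0].
  by rewrite mulr0 enorm_ge0.
have [a ha] : exists a, absK a = (p z)^-1 by apply/absK_onto; rewrite invr_ge0 ltW.
have : ~~ (N (a *: z) < d%:E)%E.
  by apply/negP => /ball; rewrite seminormZ // ha mulVf ?ltxx // gt_eqF.
rewrite -leNgt enormZ ha (XfinE fz) -EFinM !lee_fin ler_pdivlMl //.
by rewrite mulrC.
Qed.

Lemma dominated_of_coarser P p : coarser (seminorm_topology P) (enorm_topology N) ->
  is_seminorm absK p -> P p -> exists2 d, 0 < d & dominated_by N (fun z => d * p z).
Proof.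
move=> PN hp Pp; have [|d d0 dball] := PN _ (seminorm_unit_ball_open hp Pp) 0.
  by rewrite /= seminorm0 // ltr01.
exists d => //; apply: dominated_of_unit_ball => // z Nz.
by apply: dball; rewrite /= subr0.
Qed.

Lemma finest_dominated tauF p : finest_locally_convex_topology absK N tauF ->
  is_seminorm absK p -> dominated_by N p -> coarser (seminorm_topology [set p]) tauF.
Proof.
case=> _ _ finest hp pN; apply: finest; first by exists [set p]; split=> // _ ->.
by apply: seminorm_topology_coarser => _ ->.
Qed.

Section QuotientNorm.
Variables (m : nat) (w : 'I_m -> X) (c : 'I_m -> X -> K).
Hypotheses (c_lin : forall i, linear_form (c i))
  (c_Xfin : forall i x, Xfin N x -> c i x = 0).

Definition residue x := x - \sum_i c i x *: w i.

Hypothesis residue_Xfin : forall x, Xfin N (residue x).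

Definition quotient_norm x := fine (N (residue x)) + \sum_i absK (c i x).

Let residueD x y : residue (x + y) = residue x + residue y.
Proof.
rewrite /residue (eq_bigr _ (fun i _ => congr1 (fun b => b *: w i) ((c_lin i).1 x y))).
by rewrite (eq_bigr _ (fun i _ => scalerDl _ _ _)) big_split opprD addrACA.
Qed.

Let residueZ a x : residue (a *: x) = a *: residue x.
Proof.
rewrite /residue (eq_bigr _ (fun i _ => congr1 (fun b => b *: w i) ((c_lin i).2 a x))).
by rewrite (eq_bigr _ (fun i _ => esym (scalerA _ _ _))) -scaler_sumr scalerBr.
Qed.

Lemma quotient_norm_seminorm : is_seminorm absK quotient_norm.
Proof.
have absc := fun i => seminorm_form (c_lin i).
split=> [x|a x|x y]; rewrite /quotient_norm.
- by apply: addr_ge0; [apply: fine_ge0; apply: enorm_ge0 | apply: sumr_ge0].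
- rewrite residueZ fine_enormZ // mulrDr mulr_sumr; congr (_ + _).
  by apply: eq_bigr => i _; apply: (seminormZ (absc i)).
- rewrite residueD [leRHS]addrACA; apply: lerD.
    exact: (fine_enormD (residue_Xfin x) (residue_Xfin y)).
  by rewrite -big_split; apply: ler_sum => i _; apply: (seminormD (absc i)).
Qed.

Lemma quotient_norm_eq0 x : quotient_norm x = 0 -> x = 0.
Proof.
move=> /eqP; rewrite paddr_eq0 ?fine_ge0 ?enorm_ge0 ?sumr_ge0 // => /andP[/eqP nres].
move=> /eqP/psumr_eq0P c0; have {}c0 i : c i x = 0 by apply/absK_eq0/c0.
have resx : residue x = x by rewrite /residue big1 ?subr0 // => i _; rewrite c0 scale0r.
by apply/enorm_eq0; rewrite -resx XfinE // nres.
Qed.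

Lemma quotient_norm_dominated : dominated_by N quotient_norm.
Proof.
move=> x; have [fx|] := ltP (N x) +oo%E; last first.
  by rewrite leye_eq => /eqP ->; apply: leey.
have c0 i : c i x = 0 := c_Xfin i fx.
rewrite /quotient_norm /residue big1 ?subr0 => [|i _]; last by rewrite c0 scale0r.
by rewrite big1 ?addr0 => [|i _]; [rewrite -XfinE | rewrite c0 absK0].
Qed.

Lemma quotient_norm_bound p d : is_seminorm absK p -> 0 < d ->
  dominated_by N (fun z => d * p z) ->
  exists2 C, 0 < C & forall z, p z <= C * quotient_norm z.
Proof.
move=> hp d0 pN; pose M := \sum_i p (w i).
have M0 : 0 <= M by apply: sumr_ge0 => i _; apply: seminorm_ge0.
exists (d^-1 + M) => [|z]; first by rewrite ltr_wpDr ?invr_gt0.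
have p_res : p (residue z) <= d^-1 * fine (N (residue z)).
  by rewrite ler_pdivlMl // -lee_fin -XfinE.
have p_sum : p (\sum_i c i z *: w i) <= M * \sum_i absK (c i z).
  apply: le_trans (seminorm_sum hp _ _) _; rewrite mulr_sumr; apply: ler_sum => i _.
  rewrite mulrC ler_wpM2r // /M (bigD1 i) //= lerDl.
  by apply: sumr_ge0 => j _; apply: seminorm_ge0.
have pz : p z <= p (residue z) + p (\sum_i c i z *: w i).
  by rewrite -{1}[z](subrK (\sum_i c i z *: w i)) seminormD.
apply: le_trans (le_trans pz (lerD p_res p_sum)) _; rewrite mulrDl.
have f0 : 0 <= fine (N (residue z)) by apply/fine_ge0/enorm_ge0.
have s0 : 0 <= \sum_i absK (c i z) by apply: sumr_ge0.
apply: lerD; apply: ler_wpM2l;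
  by rewrite /quotient_norm ?invr_ge0 ?(ltW d0) ?lerDl ?lerDr.
Qed.

End QuotientNorm.

Lemma finest_fd_normable tauF : finest_locally_convex_topology absK N tauF ->
  finite_dim_quotient N -> exists q, [/\ is_seminorm absK q,
    forall x, q x = 0 -> x = 0 & tauF = seminorm_topology [set q]].
Proof.
move=> finF [n [v spv]].
have [m [w [spw frw]]] := exists_basis_mod subspace_Xfin spv.
have [c [c_lin c_Xfin residue_Xfin]] := coordinate_forms subspace_Xfin spw frw.
exists (quotient_norm w c); split; first exact: quotient_norm_seminorm.
  exact: quotient_norm_eq0.
have [[P [hP tauFP]] PN _] := finF; apply/seteqP; split.
  rewrite tauFP in PN *; apply: seminorm_topology_bounded => [|p Pp].
    exact: quotient_norm_seminorm.
  have [d d0 dpN] := dominated_of_coarser PN (hP p Pp) Pp.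
  exact: (quotient_norm_bound residue_Xfin (hP p Pp) d0 dpN).
apply: (finest_dominated finF); first exact: quotient_norm_seminorm.
exact: quotient_norm_dominated.
Qed.

Lemma metrizable_fd tauF : finest_locally_convex_topology absK N tauF ->
  metrizable R tauF -> finite_dim_quotient N.
Proof.
move=> finF [d [hd tauFd]]; have [[P [hP tauFP]] _ _] := finF.
have [sigma [sigma_sn sigma_base]] :=
  metrizable_countable_base hP hd (etrans (esym tauFd) tauFP).
apply: contrapT => nfd.
have nspan n (v : 'I_n -> X) : ~ spans_mod (Xfin N) v by move=> spv; apply: nfd; exists n, v.
have [psi [psi_lin psi_Xfin /choice [u psiu] psi_lf]] := dual_sequence subspace_Xfin nspan.
(* The weight [sigma k (u k) + 1] puts a multiple of [u k] in the [sigma k]-unit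
   ball while keeping [r >= 1] there. *)
pose p k x := (sigma k (u k) + 1) * absK (psi k x).
have p_sn k : is_seminorm absK (p k).
  by apply: seminormZl; [apply: seminorm_form | rewrite addr_ge0 ?seminorm_ge0].
have p_lf x : exists n, forall k, (n <= k)%N -> p k x = 0.
  by have [n psi0] := psi_lf x; exists n => k /psi0; rewrite /p => ->; rewrite absK0 mulr0.
have [r [r_sn pr r0]] := seminorm_locally_finite_sum p_sn p_lf.
have r_dom : dominated_by N r.
  move=> x; have [fx|] := ltP (N x) +oo%E; last first.
    by rewrite leye_eq => /eqP ->; apply: leey.
  by rewrite r0 ?enorm_ge0 // => k; rewrite /p psi_Xfin // absK0 mulr0.
have : tauF [set y | r y < 1].
  by apply: (finest_dominated finF r_sn r_dom); apply: seminorm_unit_ball_open.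
rewrite tauFP => /sigma_base [|k sub]; first by rewrite /= seminorm0 // ltr01.
have sk_gt0 : 0 < sigma k (u k) + 1 by rewrite ltr_wpDl ?seminorm_ge0.
have [a ha] : exists a, absK a = (sigma k (u k) + 1)^-1.
  by apply: absK_onto; rewrite invr_ge0 ltW.
have : r (a *: u k) < 1.
  apply: sub; rewrite /= (seminormZ (sigma_sn k)) ha ltr_pdivrMl // mulr1.
  by rewrite ltrDl ltr01.
apply/negP; rewrite -leNgt; apply: le_trans (pr k _).
by rewrite /p (psi_lin k).2 psiu mulr1 ha mulfV ?gt_eqF.
Qed.

End ExtendedNorm.

Lemma corollary5p11_generic : corollary5p11_statement absK X.
Proof.
move=> N tauF hN finF; split; first exact: metrizable_fd.
move=> /(finest_fd_normable hN finF) [q [q_sn q_eq0 ->]].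
exists (fun x y => q (y - x)); split; first exact: seminorm_metric.
by rewrite metric_topology_seminorm.
Qed.

End ExtendedNormedSpaces.

Lemma absCE (R : realType) (z : R[i]) : (absC z)%:C%C = `|z|.
Proof. by rewrite /absC normc_def. Qed.

Theorem corollary5p11 (R : realType) :
  (forall X : lmodType R,
     corollary5p11_statement (fun a : R => `|a|) X) /\
  (forall X : lmodType R[i],
     corollary5p11_statement (@absC R) X).
Proof.
split=> X; apply: corollary5p11_generic.
- exact: normr_ge0.
- by move=> a /normr0_eq0.
- exact: normrM.
- exact: ler_normD.
- by move=> t t0; exists t; rewrite ger0_norm.
- by move=> a; rewrite -(@ler0c R) absCE.
- by move=> a h; apply: normr0_eq0; rewrite -absCE h.
- by move=> a b; apply: (@complexI R); rewrite rmorphM /= !absCE normrM.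
- by move=> a b; rewrite -(@lecR R) rmorphD /= !absCE ler_normD.
- move=> t t0; exists t%:C%C; apply: (@complexI R).
  by rewrite absCE ger0_norm ?ler0c.
Qed.
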